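(* Let $X$ be a metric space and $A\subset X$. The following are equivalent: (1) the characteristic function $\chi_A$ of $A$ is glacially oscillating; (2) $A$ is coarsely clopen; (3) there is a glacial scale $\mathcal S$ such that every $\mathcal S$-chain starting at a point of $A$ is entirely contained in $A$.
   Context: A function $g:X\to\mathbb R$ is slowly oscillating if for all $r,\epsilon>0$ there is a bounded $K\subset X$ such that $x,y\in X\setminus K$ and $d(x,y)<r$ imply $|g(x)-g(y)|<\epsilon$. A subset $A$ of a metric space $X$ is coarsely clopen if $\chi_A$ is slowly oscillating (i.e. $A$ and $X\setminus A$ are coarsely disjoint). A glacial scale on $X$ is a sequence $\mathcal S=\{(K_i,n_i)\}_{i\ge1}$ of pairs, each $K_i$ a bounded subset of $X$ and $n_i$ a natural number, such that for every bounded $K\subset X$ and every $r>0$ there is $i$ with $K\subset K_i$ and $n_i>r$. An $\mathcal S$-chain is a finite sequence $x_1,\dots,x_n$ in $X$ such that for each $i\le n-1$ there is $m\ge1$ with $x_i,x_{i+1}\notin K_m$ and $d(x_i,x_{i+1})\le n_m$. A function $f:X\to\mathbb R$ is glacially oscillating if for every $\epsilon>0$ there is a glacial scale $\mathcal S$ such that $|f(x_1)-f(x_n)|<\epsilon$ for every $\mathcal S$-chain $x_1,\dots,x_n$. *)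

From Stdlib Require Import Reals ClassicalEpsilon.
Open Scope R_scope.

Record MetricSpace := {
  carrier :> Type;
  dist : carrier -> carrier -> R;
  dist_eq0 : forall x y, dist x y = 0 <-> x = y;
  dist_sym : forall x y, dist x y = dist y x;
  dist_tri : forall x y z, dist x z <= dist x y + dist y z
}.

Arguments dist {_} _ _.

Definition bounded {X : MetricSpace} (K : X -> Prop) : Prop :=
  exists (x0 : X) (r : R), forall x, K x -> dist x0 x <= r.

Definition subset {X : Type} (A B : X -> Prop) : Prop := forall x, A x -> B x.

Definition chi {X : Type} (A : X -> Prop) (x : X) : R :=
  if excluded_middle_informative (A x) then 1 else 0.

Definition slowly_oscillating {X : MetricSpace} (g : X -> R) : Prop :=
  forall r eps : R, 0 < r -> 0 < eps ->
    exists K : X -> Prop, bounded K /\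
      forall x y : X, ~ K x -> ~ K y -> dist x y < r -> Rabs (g x - g y) < eps.

Definition coarsely_clopen {X : MetricSpace} (A : X -> Prop) : Prop :=
  slowly_oscillating (chi A).

(* A glacial scale S = {(K_i, n_i)}_i, indexed here by i : nat (starting at 0
   instead of 1, which is immaterial). *)
Definition glacial_scale {X : MetricSpace} (K : nat -> X -> Prop) (n : nat -> nat) : Prop :=
  (forall i, bounded (K i)) /\
  (forall (B : X -> Prop) (r : R), bounded B -> 0 < r ->
     exists i, subset B (K i) /\ r < INR (n i)).

(* An S-chain x_0, ..., x_len (a finite sequence of len+1 points). *)
Definition S_chain {X : MetricSpace} (K : nat -> X -> Prop) (n : nat -> nat)
    (x : nat -> X) (len : nat) : Prop :=
  forall i, (i < len)%nat ->
    exists m, ~ K m (x i) /\ ~ K m (x (S i)) /\ dist (x i) (x (S i)) <= INR (n m).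

Definition glacially_oscillating {X : MetricSpace} (f : X -> R) : Prop :=
  forall eps : R, 0 < eps ->
    exists (K : nat -> X -> Prop) (n : nat -> nat), glacial_scale K n /\
      forall (x : nat -> X) (len : nat), S_chain K n x len ->
        Rabs (f (x 0%nat) - f (x len)) < eps.

From Pilot Require Import Defs.
From Stdlib Require Import Reals Lra Lia ClassicalEpsilon.
(* Reals also exports a [dist]; the metric of [Defs] must take precedence. *)
Import Defs.
Open Scope R_scope.

(* Since chi_A takes only the values 0 and 1, an oscillation of chi_A below 1
   between two points means both or neither lie in A.  We prove the cycle
   (1) -> (2) -> (3) -> (1):
   - (1) -> (2): two far-out points at distance < r form an S-chain of
     length one once S contains a step (K_i, n_i) with n_i > r.
   - (2) -> (3): for each m choose a bounded K_m outside of which A is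
     invariant under jumps of size <= m; enlarging K_m by the ball of radius m
     around a base point turns (K_m, m) into a glacial scale, and A is then
     invariant along each step of a chain.
   - (3) -> (1): a reversed S-chain is again an S-chain, so the end points of
     a chain are both in A or both outside A, and chi_A agrees on them. *)

Definition chain_closed {X : MetricSpace} (K : nat -> X -> Prop) (n : nat -> nat)
    (A : X -> Prop) : Prop :=
  forall (x : nat -> X) (len : nat), S_chain K n x len -> A (x 0%nat) ->
    forall i, (i <= len)%nat -> A (x i).

Lemma dist_ge0 (X : MetricSpace) (x y : X) : 0 <= dist x y.
Proof.
  pose proof (dist_tri X x y x) as Htri.
  rewrite (dist_sym X y x) in Htri.
  assert (Hxx : dist x x = 0) by (apply dist_eq0; reflexivity).
  lra.
Qed.

Lemma chi_close_iff {T : Type} (A : T -> Prop) (x y : T) :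
  Rabs (chi A x - chi A y) < 1 -> (A x <-> A y).
Proof.
  unfold chi.
  destruct (excluded_middle_informative (A x)), (excluded_middle_informative (A y));
    intro Hlt; try tauto; exfalso.
  - replace (1 - 0) with 1 in Hlt by ring. rewrite Rabs_R1 in Hlt. lra.
  - replace (0 - 1) with (- (1)) in Hlt by ring.
    rewrite Rabs_Ropp, Rabs_R1 in Hlt. lra.
Qed.

Lemma chi_eq_of_iff {T : Type} (A : T -> Prop) (x y : T) :
  (A x <-> A y) -> chi A x = chi A y.
Proof.
  unfold chi.
  destruct (excluded_middle_informative (A x)), (excluded_middle_informative (A y));
    tauto.
Qed.

Lemma bounded_union {X : MetricSpace} (B C : X -> Prop) :
  bounded B -> bounded C -> bounded (fun x => B x \/ C x).
Proof.
  intros (b & s & Hb) (c & t & Hc).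
  exists b, (Rabs s + dist b c + Rabs t).
  intros x [Hx | Hx].
  - specialize (Hb x Hx). pose proof (Rle_abs s). pose proof (dist_ge0 X b c).
    pose proof (Rabs_pos t). lra.
  - specialize (Hc x Hx). pose proof (dist_tri X b c x). pose proof (Rle_abs t).
    pose proof (Rabs_pos s). lra.
Qed.

Lemma bounded_ball {X : MetricSpace} (x0 : X) (r : R) :
  bounded (fun x => dist x0 x <= r).
Proof. exists x0, r. tauto. Qed.

Lemma glacial_scale_of_bounded_family {X : MetricSpace} (x0 : X) (F : nat -> X -> Prop) :
  (forall m, bounded (F m)) ->
  glacial_scale (fun m x => F m x \/ dist x0 x <= INR m) (fun m => m).
Proof.
  intro HF. split.
  - intro m. apply bounded_union; [apply HF | apply bounded_ball].
  - intros B r (y & s & Hs) Hr.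
    destruct (INR_unbounded (Rmax r (dist x0 y + s))) as (N & HN).
    pose proof (Rmax_l r (dist x0 y + s)). pose proof (Rmax_r r (dist x0 y + s)).
    exists N. split; [| lra].
    intros x Hx. right. specialize (Hs x Hx). pose proof (dist_tri X x0 y x). lra.
Qed.

Lemma S_chain_step {X : MetricSpace} (K : nat -> X -> Prop) (n : nat -> nat)
    (m : nat) (x y : X) :
  ~ K m x -> ~ K m y -> dist x y <= INR (n m) ->
  S_chain K n (fun k => match k with O => x | _ => y end) 1.
Proof.
  intros Hx Hy Hd k Hk. replace k with 0%nat by lia. exists m. tauto.
Qed.

Lemma S_chain_rev {X : MetricSpace} (K : nat -> X -> Prop) (n : nat -> nat)
    (x : nat -> X) (len : nat) :
  S_chain K n x len -> S_chain K n (fun i => x (len - i)%nat) len.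
Proof.
  intros Hch i Hi.
  destruct (Hch (len - S i)%nat ltac:(lia)) as (m & Hout1 & Hout2 & Hd).
  replace (S (len - S i)) with (len - i)%nat in * by lia.
  exists m. rewrite dist_sym. tauto.
Qed.

Lemma chain_closed_of_steps {X : MetricSpace} (K : nat -> X -> Prop) (n : nat -> nat)
    (A : X -> Prop) :
  (forall m x y, ~ K m x -> ~ K m y -> dist x y <= INR (n m) -> A x -> A y) ->
  chain_closed K n A.
Proof.
  intros Hstep x len Hch HA0 i.
  induction i as [| i IH]; intro Hi; [exact HA0 |].
  destruct (Hch i ltac:(lia)) as (m & Hout1 & Hout2 & Hd).
  apply (Hstep m (x i)); [exact Hout1 | exact Hout2 | exact Hd |].
  apply IH. lia.
Qed.

Lemma chain_closed_ends {X : MetricSpace} (K : nat -> X -> Prop) (n : nat -> nat)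
    (A : X -> Prop) (x : nat -> X) (len : nat) :
  chain_closed K n A -> S_chain K n x len -> (A (x 0%nat) <-> A (x len)).
Proof.
  intros Hcl Hch. split; intro HA.
  - exact (Hcl x len Hch HA len (le_n len)).
  - pose proof (Hcl _ len (S_chain_rev K n x len Hch)) as Hrev. simpl in Hrev.
    rewrite Nat.sub_0_r in Hrev. specialize (Hrev HA len (le_n len)).
    rewrite Nat.sub_diag in Hrev. exact Hrev.
Qed.

Lemma coarsely_clopen_jumps {X : MetricSpace} (A : X -> Prop) :
  coarsely_clopen A -> forall m : nat, exists F : X -> Prop, bounded F /\
    forall x y, ~ F x -> ~ F y -> dist x y <= INR m -> (A x <-> A y).
Proof.
  intros Hcc m.
  assert (Hr : 0 < INR m + 1) by (pose proof (pos_INR m); lra).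
  destruct (Hcc (INR m + 1) 1 Hr Rlt_0_1) as (F & HFb & HF).
  exists F. split; [exact HFb |].
  intros x y Hx Hy Hd. apply chi_close_iff, HF; [exact Hx | exact Hy | lra].
Qed.

Lemma glacially_oscillating_coarsely_clopen {X : MetricSpace} (A : X -> Prop) :
  glacially_oscillating (chi A) -> coarsely_clopen A.
Proof.
  intros Hgo r eps Hr Heps.
  destruct (Hgo eps Heps) as (K & n & [HKb HKcover] & Hosc).
  destruct (HKcover (K 0%nat) r (HKb 0%nat) Hr) as (i & _ & Hni).
  exists (K i). split; [apply HKb |].
  intros x y Hx Hy Hd.
  apply (Hosc _ 1%nat (S_chain_step K n i x y Hx Hy ltac:(lra))).
Qed.

Lemma coarsely_clopen_chain_closed {X : MetricSpace} (A : X -> Prop) :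
  coarsely_clopen A -> exists K n, glacial_scale K n /\ chain_closed K n A.
Proof.
  intro Hcc.
  destruct (choice _ (coarsely_clopen_jumps A Hcc)) as (F & HF).
  destruct (proj1 (HF 0%nat)) as (x0 & _ & _).
  exists (fun m x => F m x \/ dist x0 x <= INR m), (fun m => m). split.
  - apply glacial_scale_of_bounded_family. intro m. apply HF.
  - apply chain_closed_of_steps. intros m x y Hx Hy Hd.
    apply (proj2 (HF m) x y); tauto.
Qed.

Lemma chain_closed_glacially_oscillating {X : MetricSpace} (A : X -> Prop) :
  (exists K n, glacial_scale K n /\ chain_closed K n A) ->
  glacially_oscillating (chi A).
Proof.
  intros (K & n & Hscale & Hcl) eps Heps. exists K, n. split; [exact Hscale |].
  intros x len Hch.
  rewrite (chi_eq_of_iff A _ _ (chain_closed_ends K n A x len Hcl Hch)).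
  rewrite Rminus_diag, Rabs_R0. exact Heps.
Qed.

Theorem proposition3p11 (X : MetricSpace) (A : X -> Prop) :
  (glacially_oscillating (chi A) <-> coarsely_clopen A) /\
  (coarsely_clopen A <->
    exists (K : nat -> X -> Prop) (n : nat -> nat), glacial_scale K n /\
      forall (x : nat -> X) (len : nat), S_chain K n x len -> A (x 0%nat) ->
        forall i, (i <= len)%nat -> A (x i)).
Proof.
  pose proof (glacially_oscillating_coarsely_clopen A) as H12.
  pose proof (coarsely_clopen_chain_closed A) as H23.
  pose proof (chain_closed_glacially_oscillating A) as H31.
  unfold chain_closed in *. tauto.
Qed.
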